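(* $\mathcal L(RTG)\subsetneq\mathcal L(TG)$: every language generated by a regional tile grammar is generated by a tile grammar, and some language generated by a tile grammar is generated by no regional tile grammar.
   Context: Pictures: for a finite alphabet $\Sigma$, a picture over $\Sigma$ is a nonempty rectangular array of elements of $\Sigma$; $\Sigma^{++}$ is the set of all of them. For $\#\notin\Sigma$, $\hat p$ is $p$ surrounded by a one-pixel frame of $\#$'s. A tile is a $2\times2$ picture; $\llbracket q\rrbracket$ is the set of tiles occurring as subpictures (on consecutive rows and columns) of $q$. For a finite tile set $\theta$ over $\Gamma\cup\{\#\}$, $LOC(\theta)=\{p\in\Gamma^{++}:\llbracket\hat p\rrbracket\subseteq\theta\}$. Subdomains, partitions: a subdomain $(x,y;x',y')$ of $p$ is the rectangle of positions $\{x,\dots,x'\}\times\{y,\dots,y'\}$, $\mathrm{spic}(p,d)$ its subpicture, $d\oplus(a,b)$ its translate; $d$ is $C$-homogeneous (label $C$) if all its pixels equal $C$; subdomains are adjacent if they share a horizontal or vertical boundary segment of positive length. A homogeneous partition of $p$ is a partition of its positions into homogeneous subdomains; strong if adjacent subdomains have distinct labels (then unique, written $\Pi(p)$); regional if distinct subdomains have distinct labels; $\mathrm{unit}(p)$ is the partition into single pixels. A language is regional if each of its pictures admits a regional homogeneous partition. Tile grammars: a TG is $G=(\Sigma,N,S,R)$, $\Sigma,N$ disjoint finite alphabets, $S\in N$, finite rule set $R$ with fixed size rules $A\to t$ ($t\in\Sigma$) and variable size rules $A\to\omega$ ($\omega$ a finite tile set over $N\cup\{\#\}$ with no concave tile,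 i.e. no tile with rows $(B,B)$ over $(C,B)$ or a rotation of it, $B\ne\#$, $C\ne B$). $(p,\pi)\Rightarrow_G(p',\pi')$ iff for some $A$-homogeneous $d=(x,y;x',y')\in\pi$ and a rule with left side $A$, $p'$ is $p$ with $\mathrm{spic}(p,d)$ replaced by $t$ (rule $A\to t$, $d$ a single pixel) or by some $s\in LOC(\omega)$ of the size of $d$, and $\pi'=(\pi\setminus\{d\})\cup(\Pi(s)\oplus(x-1,y-1))$. $L(G)=\{p\in\Sigma^{++}:(S^{|p|},\{\text{positions of }p\})\Rightarrow_G^*(p,\mathrm{unit}(p))\}$, $S^{|p|}$ the $S$-homogeneous picture of the size of $p$. A regional tile grammar (RTG) is a TG in which $LOC(\omega)$ is regional for every variable size rule $A\to\omega$. $\mathcal L(TG)$, $\mathcal L(RTG)$ denote the classes of languages generated by TGs, resp. RTGs. *)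

From HB Require Import structures.
From mathcomp Require Import all_boot all_order.
From mathcomp Require Import ssralg matrix.
Set Implicit Arguments. Unset Strict Implicit. Unset Printing Implicit Defensive.

(* A picture of size m x n over T is a matrix 'M[T]_(m,n) (nonemptiness: 0<m, 0<n
   is imposed where pictures are used). Indices are 0-based: row i, column j. *)

Definition pget (T : Type) (m n : nat) (M : 'M[T]_(m, n)) (i j : nat) : option T :=
  match (insub i : option 'I_m), (insub j : option 'I_n) with
  | Some i', Some j' => Some (M i' j')
  | _, _ => None
  end.

(* the framed picture \hat s : positions 0..h+1 x 0..w+1, None plays the role of # *)
Definition framed (T : Type) (h w : nat) (s : 'M[T]_(h, w)) (i j : nat) : option T :=
  if (i == 0) || (j == 0) then None else pget s i.-1 j.-1.

Definition tile_at (T : Type) (h w : nat) (s : 'M[T]_(h, w)) (i j : nat) : 'M[option T]_2 :=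
  \matrix_(a < 2, b < 2) framed s (i + a) (j + b).

Definition LOC (N : finType) (om : {set 'M[option N]_2}) (h w : nat) (s : 'M[N]_(h, w)) : Prop :=
  0 < h /\ 0 < w /\ forall i j, i <= h -> j <= w -> tile_at s i j \in om.

Definition concave (N : finType) (t : 'M[option N]_2) : bool :=
  [exists b : N, exists k : 'I_2 * 'I_2,
     (t k.1 k.2 != Some b) &&
     [forall k' : 'I_2 * 'I_2, (k' != k) ==> (t k'.1 k'.2 == Some b)]].

(* subdomain (r1,c1;r2,c2): rows r1..r2, columns c1..c2 (0-based, inclusive) *)
Record rect := Rect { r1 : nat; c1 : nat; r2 : nat; c2 : nat }.

Definition in_rect (x : rect) (i j : nat) : bool :=
  (r1 x <= i <= r2 x) && (c1 x <= j <= c2 x).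

Definition valid_in (h w : nat) (x : rect) : bool :=
  [&& r1 x <= r2 x, c1 x <= c2 x, r2 x < h & c2 x < w].

(* d ⊕ (a,b) with offset given by the top-left corner of d *)
Definition shift (d y : rect) : rect :=
  Rect (r1 d + r1 y) (c1 d + c1 y) (r1 d + r2 y) (c1 d + c2 y).

(* adjacency: sharing a horizontal or vertical boundary segment of positive length *)
Definition adjacent (x y : rect) : bool :=
  ((r2 x).+1 == r1 y) && (maxn (c1 x) (c1 y) <= minn (c2 x) (c2 y)) ||
  ((r2 y).+1 == r1 x) && (maxn (c1 x) (c1 y) <= minn (c2 x) (c2 y)) ||
  ((c2 x).+1 == c1 y) && (maxn (r1 x) (r1 y) <= minn (r2 x) (r2 y)) ||
  ((c2 y).+1 == c1 x) && (maxn (r1 x) (r1 y) <= minn (r2 x) (r2 y)).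

Definition label (T : Type) (h w : nat) (s : 'M[T]_(h, w)) (x : rect) : option T :=
  pget s (r1 x) (c1 x).

Definition hpartition (T : Type) (h w : nat) (s : 'M[T]_(h, w)) (P : rect -> Prop) : Prop :=
  (forall x, P x -> valid_in h w x) /\
  (forall i j, i < h -> j < w -> exists! x, P x /\ in_rect x i j) /\
  (forall x, P x -> forall i j, in_rect x i j -> pget s i j = label s x).

Definition strong_hpartition (T : Type) (h w : nat) (s : 'M[T]_(h, w)) (P : rect -> Prop) : Prop :=
  hpartition s P /\
  forall x y, P x -> P y -> x <> y -> adjacent x y -> label s x <> label s y.

Definition regional_hpartition (T : Type) (h w : nat) (s : 'M[T]_(h, w)) (P : rect -> Prop) : Prop :=
  hpartition s P /\
  forall x y, P x -> P y -> x <> y -> label s x <> label s y.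

(* a tile grammar: terminals Sig, nonterminals N (disjoint by construction),
   fixed size rules A -> t, variable size rules A -> omega *)
Record TG (Sig N : finType) := MkTG {
  tg_start : N;
  tg_fixed : {set N * Sig};
  tg_var : {set N * {set 'M[option N]_2}} }.

Definition is_TG (Sig N : finType) (G : TG Sig N) : Prop :=
  forall A om, (A, om) \in tg_var G -> forall t, t \in om -> ~~ concave t.

Definition is_RTG (Sig N : finType) (G : TG Sig N) : Prop :=
  is_TG G /\
  forall A om, (A, om) \in tg_var G ->
    forall h w (s : 'M[N]_(h, w)), LOC om s -> exists P, regional_hpartition s P.

Definition homog (T : Type) (m n : nat) (p : 'M[T]_(m, n)) (d : rect) (v : T) : Prop :=
  forall i j, in_rect d i j -> pget p i j = Some v.

Inductive step (Sig N : finType) (G : TG Sig N) (m n : nat) :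
  'M[Sig + N]_(m, n) -> (rect -> Prop) -> 'M[Sig + N]_(m, n) -> (rect -> Prop) -> Prop :=
| step_fixed (p : 'M[Sig + N]_(m, n)) (pi : rect -> Prop) (p' : 'M[Sig + N]_(m, n)) (pi' : rect -> Prop) (d : rect) (A : N) (t : Sig) :
    pi d -> r1 d = r2 d -> c1 d = c2 d -> valid_in m n d ->
    homog p d (inr A) -> (A, t) \in tg_fixed G ->
    (forall (i : 'I_m) (j : 'I_n), p' i j = if in_rect d i j then inl t else p i j) ->
    (forall x, pi' x <-> pi x) ->
    step G p pi p' pi'
| step_var (p : 'M[Sig + N]_(m, n)) (pi : rect -> Prop) (p' : 'M[Sig + N]_(m, n)) (pi' : rect -> Prop) (d : rect) (A : N) (om : {set 'M[option N]_2})
    (s : 'M[N]_((r2 d - r1 d).+1, (c2 d - c1 d).+1)) (P : rect -> Prop) :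
    pi d -> valid_in m n d ->
    homog p d (inr A) -> (A, om) \in tg_var G ->
    LOC om s -> strong_hpartition s P ->
    (forall (i : 'I_m) (j : 'I_n),
        if in_rect d i j then Some (p' i j) = omap inr (pget s (i - r1 d) (j - c1 d))
        else p' i j = p i j) ->
    (forall x, pi' x <-> ((pi x /\ x <> d) \/ exists y, P y /\ x = shift d y)) ->
    step G p pi p' pi'.

Inductive derives (Sig N : finType) (G : TG Sig N) (m n : nat) :
  'M[Sig + N]_(m, n) -> (rect -> Prop) -> 'M[Sig + N]_(m, n) -> (rect -> Prop) -> Prop :=
| derives_refl p pi : derives G p pi p pi
| derives_step p pi p1 pi1 p2 pi2 :
    step G p pi p1 pi1 -> derives G p1 pi1 p2 pi2 -> derives G p pi p2 pi2.

Definition TGlang (Sig N : finType) (G : TG Sig N) (m n : nat) (p : 'M[Sig]_(m, n)) : Prop :=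
  0 < m /\ 0 < n /\
  exists pi0 pif : rect -> Prop,
    (forall x, pi0 x <-> x = Rect 0 0 m.-1 n.-1) /\
    (forall x, pif x <-> exists i j, [/\ i < m, j < n & x = Rect i j i j]) /\
    derives G (const_mx (inr (tg_start G))) pi0 (map_mx inl p) pif.

Definition same_lang (Sig N N' : finType) (G : TG Sig N) (G' : TG Sig N') : Prop :=
  forall m n (p : 'M[Sig]_(m, n)), TGlang G p <-> TGlang G' p.

From mathcomp Require Import all_boot all_order.
From mathcomp Require Import ssralg matrix zify.
From Stdlib Require Import Classical ClassicalEpsilon.
From Stdlib Require List.
Set Implicit Arguments. Unset Strict Implicit. Unset Printing Implicit Defensive.

(* The inclusion is immediate: a regional tile grammar is a tile grammar.

   For strictness we reason on derivation trees instead of the rewriting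
   relation: [tree G X h w g] states that the h x w picture g derives from X.

   The witness is the parity grammar, whose language contains every square
   picture p_e(i, j) = e(i) xor e(j) ([xor_pic_in]) and only pictures all of whose
   2x2 windows are even ([parity_windows]). Suppose a regional tile grammar G
   generates it. For n = k+1 and f : 'I_k -> bool, follow the tree of p_f through
   unary rule applications down to its first nontrivial split ([first_split]) and
   record the nonterminal, the tile set and the box table of the picture s
   produced there ([split_record]); by regionality, s is determined by its box
   table ([box_table_inj]). For large k there are fewer records than functions f
   ([growth], [pigeonhole]), so distinct f1, f2 share a record and, strong
   partitions being unique ([strong_unique]), both trees split s along the same
   blocks. Grafting ([graft]) into the tree of p_f2 the subtree of p_f1 for the
   block containing a pixel (i, i+1) at which f1 xor f2 changes yields a picture
   of L(G) with an odd window ([hybrid_odd_window]), a contradiction. *)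

Notation height x := (r2 x - r1 x).+1.
Notation width x := (c2 x - c1 x).+1.

Definition whole (m n : nat) : rect := Rect 0 0 m.-1 n.-1.

Ltac rect_lia := unfold whole, in_rect, valid_in, shift in *; simpl in *; lia.

Lemma pgetE (T : Type) m n (M : 'M[T]_(m, n)) i j (Hi : i < m) (Hj : j < n) :
  pget M i j = Some (M (Ordinal Hi) (Ordinal Hj)).
Proof. by rewrite /pget !insubT. Qed.

Lemma pget_out (T : Type) m n (M : 'M[T]_(m, n)) i j :
  ~~ ((i < m) && (j < n)) -> pget M i j = None.
Proof.
rewrite /pget negb_and => /orP [Hi|Hj]; first by rewrite insubF //; apply/negbTE.
by case: insubP => [x _ _|_] //; rewrite insubF //; apply/negbTE.
Qed.

Lemma pget_ord (T : Type) m n (M : 'M[T]_(m, n)) (i : 'I_m) (j : 'I_n) :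
  pget M i j = Some (M i j).
Proof. by rewrite (pgetE M (ltn_ord i) (ltn_ord j)); do 2 f_equal; apply: val_inj. Qed.

Lemma pget_map (T1 T2 : Type) (f : T1 -> T2) m n (M : 'M[T1]_(m, n)) i j :
  pget (map_mx f M) i j = omap f (pget M i j).
Proof.
case Hij: ((i < m) && (j < n)); last by rewrite !pget_out ?Hij.
by move/andP: Hij => [Hi Hj]; rewrite !(pgetE _ Hi Hj) mxE.
Qed.

Lemma pget_congr (T : Type) m n (p p' : 'M[T]_(m, n)) i j :
  (forall (i' : 'I_m) (j' : 'I_n), val i' = i -> val j' = j -> p' i' j' = p i' j') ->
  pget p' i j = pget p i j.
Proof.
move=> H; case Hij: ((i < m) && (j < n)); last by rewrite !pget_out ?Hij.
by move/andP: Hij => [Hi Hj]; rewrite !(pgetE _ Hi Hj) H.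
Qed.

Lemma in_rect_valid m n x i j : valid_in m n x -> in_rect x i j -> (i < m) && (j < n).
Proof. by move=> *; rect_lia. Qed.

Lemma corner_in x : r1 x <= r2 x -> c1 x <= c2 x -> in_rect x (r1 x) (c1 x).
Proof. by move=> *; rect_lia. Qed.

Lemma rect_eq x y : r1 x <= r2 x -> c1 x <= c2 x -> r1 y <= r2 y -> c1 y <= c2 y ->
  (forall i j, in_rect x i j = in_rect y i j) -> x = y.
Proof.
move=> h1 h2 h3 h4 E.
have i1 : in_rect y (r1 x) (c1 x) by rewrite -E; rect_lia.
have i2 : in_rect y (r2 x) (c2 x) by rewrite -E; rect_lia.
have i3 : in_rect x (r1 y) (c1 y) by rewrite E; rect_lia.
have i4 : in_rect x (r2 y) (c2 y) by rewrite E; rect_lia.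
by case: x h1 h2 i1 i2 i3 i4 {E} => a b c d; case: y h3 h4 => a' b' c' d' /= *; f_equal; rect_lia.
Qed.

Lemma in_rect_shift d y i j : in_rect (shift d y) i j =
  [&& r1 d <= i, c1 d <= j & in_rect y (i - r1 d) (j - c1 d)].
Proof. by apply/idP/idP => *; rect_lia. Qed.

Lemma shift_sub x y i j : valid_in (height x) (width x) y ->
  r1 x <= r2 x -> c1 x <= c2 x -> in_rect (shift x y) i j -> in_rect x i j.
Proof. by move=> *; rect_lia. Qed.

Definition part m n (pi : rect -> Prop) :=
  (forall x, pi x -> valid_in m n x) /\
  (forall i j, i < m -> j < n -> exists! x, pi x /\ in_rect x i j).

Lemma hpartition_part (T : Type) h w (s : 'M[T]_(h, w)) P : hpartition s P -> part h w P.
Proof. by case=> [HV [HC _]]. Qed.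

Lemma label_some (T : Type) h w (s : 'M[T]_(h, w)) y : valid_in h w y ->
  exists Y, label s y = Some Y.
Proof.
by move=> /and4P [a b c d]; rewrite /label (pgetE _ (leq_ltn_trans a c) (leq_ltn_trans b d)); eexists.
Qed.

Lemma part_disj m n pi x y i j : part m n pi -> pi x -> pi y ->
  in_rect x i j -> in_rect y i j -> x = y.
Proof.
move=> [Hv Hc] Px Py Ix Iy.
have /andP [Hi Hj] := in_rect_valid (Hv _ Px) Ix.
have [z [_ U]] := Hc i j Hi Hj.
by rewrite -(U x (conj Px Ix)) -(U y (conj Py Iy)).
Qed.

Lemma shift_cover x (P : rect -> Prop) i j :
  part (height x) (width x) P -> in_rect x i j ->
  exists y, P y /\ in_rect (shift x y) i j.
Proof.
move=> [_ Hc] I.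
have [y [[Py Iy] _]] : exists! y, P y /\ in_rect y (i - r1 x) (j - c1 x) by apply: Hc; rect_lia.
by exists y; split => //; rewrite in_rect_shift Iy andbT; rect_lia.
Qed.

Lemma part_whole m n : 0 < m -> 0 < n -> part m n (fun z => z = whole m n).
Proof.
move=> Hm Hn; split; first by move=> x ->; rect_lia.
move=> i j Hi Hj; exists (whole m n); split; first by split => //; rect_lia.
by move=> x [].
Qed.

Lemma part_eqv m n (pi pi' : rect -> Prop) : (forall x, pi' x <-> pi x) -> part m n pi -> part m n pi'.
Proof.
move=> E [Hv Hc]; split; first by move=> x /E; apply: Hv.
move=> i j Hi Hj; have [x [[Px Ix] U]] := Hc i j Hi Hj.
by exists x; split => [|x' [/E Px' Ix']]; [split => //; apply/E | apply: U].
Qed.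

Section Derivations.
Variables (Sig N : finType) (G : TG Sig N).

Lemma step_part m n (p : 'M[Sig + N]_(m, n)) pi p' pi' :
  step G p pi p' pi' -> part m n pi -> part m n pi'.
Proof.
case=> {p pi p' pi'}; first by move=> p pi p' pi' d A t _ _ _ _ _ _ _ E; apply: part_eqv.
move=> p pi p' pi' d A om s P Pd Vd _ _ _ [[Vy [Cy _]] _] _ E [Hv Hc]; split.
  move=> x /E [[Px _]|[y [Py ->]]]; first exact: Hv.
  by have := Vy y Py; move: Vd => *; rect_lia.
have Hp : part m n pi by split.
move=> i j Hi Hj; case: (boolP (in_rect d i j)) => Id.
  have [y [[Py Iy] U]] : exists! y, P y /\ in_rect y (i - r1 d) (j - c1 d).
    by apply: Cy; rect_lia.
  exists (shift d y); split.
    by split; [apply/E; right; exists y | rewrite in_rect_shift Iy andbT; rect_lia].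
  move=> x' [/E [[Px' Nx']|[y' [Py' ->]]] Ix'].
    by case: Nx'; apply: (part_disj Hp Px' Pd Ix' Id).
  by rewrite (U y') //; split => //; move: Ix'; rewrite in_rect_shift => /and3P [].
have [x [[Px Ix] U]] := Hc i j Hi Hj.
have Nx : x <> d by move=> Ex; move: Id; rewrite -Ex Ix.
exists x; split; first by split => //; apply/E; left.
move=> x' [/E [[Px' _]|[y' [Py' ->]]] Ix']; first exact: U.
by have := Vy y' Py'; move: Id Ix' Vd => /negP Id *; exfalso; apply: Id; rect_lia.
Qed.

Lemma derives_part m n (p1 : 'M[Sig + N]_(m, n)) pi1 p2 pi2 :
  derives G p1 pi1 p2 pi2 -> part m n pi1 -> part m n pi2.
Proof. by elim=> // p pi p' pi' p'' pi'' Hs _ IH H; apply: IH; apply: step_part Hs H. Qed.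

Lemma derives_trans m n (p1 : 'M[Sig + N]_(m, n)) pi1 p2 pi2 p3 pi3 :
  derives G p1 pi1 p2 pi2 -> derives G p2 pi2 p3 pi3 -> derives G p1 pi1 p3 pi3.
Proof. by elim=> // p pi p' pi' p'' pi'' Hs _ IH H; apply: derives_step Hs _; apply: IH. Qed.

Lemma step_inv m n (p p1 : 'M[Sig + N]_(m, n)) pi pi1 :
  step G p pi p1 pi1 -> exists d A, [/\ pi d, homog p d (inr A),
    (forall i j, ~~ in_rect d i j -> pget p1 i j = pget p i j),
    (forall x, pi x -> x <> d -> pi1 x) &
    (exists t, [/\ r1 d = r2 d, c1 d = c2 d, (A, t) \in tg_fixed G,
                   pget p1 (r1 d) (c1 d) = Some (inl t) & pi1 d]) \/
    (exists om (s : 'M[N]_(height d, width d)) P, [/\ (A, om) \in tg_var G, LOC om s,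
        strong_hpartition s P, forall y, P y -> pi1 (shift d y) &
        forall i j, in_rect d i j -> pget p1 i j = omap inr (pget s (i - r1 d) (j - c1 d))])].
Proof.
case=> {p pi p1 pi1}.
  move=> p pi p1 pi1 d A t Pd Er Ec Vd Hd Ht E EP; exists d, A; split => //.
  - by move=> i j Ni; apply: pget_congr => i' j' Ei Ej; subst i j; rewrite E (negbTE Ni).
  - by move=> x Px _; apply/EP.
  left; exists t; split => //; last by apply/EP.
  have Hi : r1 d < m by rect_lia.
  have Hj : c1 d < n by rect_lia.
  by rewrite (pgetE _ Hi Hj) E /= ifT //; rect_lia.
move=> p pi p1 pi1 d A om s P Pd Vd Hd Hv Hl Hs E EP; exists d, A; split => //.
- by move=> i j Ni; apply: pget_congr => i' j' Ei Ej; subst i j; move: (E i' j'); rewrite (negbTE Ni).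
- by move=> x Px Nx; apply/EP; left.
right; exists om, s, P; split => //; first by move=> y Py; apply/EP; right; exists y.
move=> i j I; have /andP [Hi Hj] := in_rect_valid Vd I.
by rewrite (pgetE _ Hi Hj); move: (E (Ordinal Hi) (Ordinal Hj)); rewrite /= I.
Qed.

Lemma derives_frozen m n (p : 'M[Sig + N]_(m, n)) pi p2 pi2 :
  derives G p pi p2 pi2 -> part m n pi -> forall x, pi x -> ~ (exists X, homog p x (inr X)) ->
  forall i j, in_rect x i j -> pget p2 i j = pget p i j.
Proof.
elim=> {p pi p2 pi2} // p pi p1 pi1 p2 pi2 Hs _ IH Hp x Px Nh i j Ix.
have [d [A [Pd Hd Eo Ep _]]] := step_inv Hs.
have Nxd : x <> d by move=> E; apply: Nh; exists A; rewrite E.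
have Eq : forall i j, in_rect x i j -> pget p1 i j = pget p i j.
  by move=> i' j' I'; apply: Eo; apply/negP => Id; apply: Nxd; apply: (part_disj Hp Px Pd I' Id).
rewrite -Eq // (IH (step_part Hs Hp) x) //; first exact: Ep.
by move=> [X HX]; apply: Nh; exists X => i' j' I'; rewrite -Eq // HX.
Qed.

Lemma homog_eq m n (p : 'M[Sig + N]_(m, n)) x X A : r1 x <= r2 x -> c1 x <= c2 x ->
  homog p x (inr X) -> homog p x (inr A) -> X = A.
Proof.
move=> h1 h2 H1 H2; have I := corner_in h1 h2.
by move: (H1 _ _ I); rewrite (H2 _ _ I) => -[].
Qed.

End Derivations.

Definition pixelize (pi B : rect -> Prop) : rect -> Prop :=
  fun z => (pi z /\ ~ B z) \/ exists q i j, [/\ B q, in_rect q i j & z = Rect i j i j].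

Lemma pixelize_ext pi (B B' : rect -> Prop) z : (forall q, B q <-> B' q) ->
  pixelize pi B z <-> pixelize pi B' z.
Proof.
move=> E; rewrite /pixelize; split.
  by case=> [[Pz Nz]|[q [i [j [/E Bq I Ez]]]]]; [left; split => // /E | right; exists q, i, j].
by case=> [[Pz Nz]|[q [i [j [/E Bq I Ez]]]]]; [left; split => // /E | right; exists q, i, j].
Qed.

Lemma pixelize_add m n pi pi1 (B : rect -> Prop) q z :
  part m n pi -> (forall q', B q' -> pi q') -> pi q -> ~ B q ->
  (forall z, pi1 z <-> pixelize pi B z) ->
  pixelize pi1 (eq^~ q) z <-> pixelize pi (fun q' => B q' \/ q' = q) z.
Proof.
move=> Hp HB Pq Nq E; rewrite /pixelize E /pixelize; split.
  case=> [[[[Pz Nz]|[q' [i [j [Bq' I ->]]]]] Nzq]|[_ [i [j [-> I ->]]]]].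
  - by left; split => // -[].
  - by right; exists q', i, j; split => //; left.
  - by right; exists q, i, j; split => //; right.
case=> [[Pz Nz]|[q' [i [j [[Bq'|->] I ->]]]]].
- by left; split; [left; split => // Bz; apply: Nz; left | move=> Ez; apply: Nz; right].
- left; split; first by right; exists q', i, j.
  move=> Ez; apply: Nq; suff -> : q = q' by [].
  by apply: (part_disj Hp Pq (HB q' Bq') _ I); rewrite -Ez; rect_lia.
- by right; exists q, i, j.
Qed.

Lemma pixelize_children m n pi x (P : rect -> Prop) z :
  part m n pi -> pi x -> part (height x) (width x) P ->
  pixelize (fun z => (pi z /\ z <> x) \/ exists y, P y /\ z = shift x y)
           (fun q => exists y, P y /\ q = shift x y) z <-> pixelize pi (eq^~ x) z.
Proof.
move=> Hp Px HP; have /and4P [h1 h2 h3 h4] := proj1 Hp x Px; rewrite /pixelize; split.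
  case=> [[[[Pz Nzx]|[y [Py ->]]] Nc]|[q [i [j [[y [Py ->]] I ->]]]]].
  - by left.
  - by case: Nc; exists y.
  - by right; exists x, i, j; split => //; apply: shift_sub (proj1 HP y Py) h1 h2 I.
case=> [[Pz Nzx]|[q [i [j [-> I ->]]]]].
  left; split; first by left.
  move=> [y [Py Ez]]; apply: Nzx; have Vy := proj1 HP y Py.
  have Iz : in_rect z (r1 z) (c1 z) by rewrite Ez; rect_lia.
  by apply: (part_disj Hp Pz Px Iz); rewrite Ez in Iz *; apply: shift_sub Vy h1 h2 Iz.
have [y [Py Iy]] := shift_cover HP I.
by right; exists (shift x y), i, j; split => //; exists y.
Qed.

Section Trees.
Variables (Sig N : finType) (G : TG Sig N).

Definition subf (g : nat -> nat -> option (Sig + N)) (y : rect) :=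
  fun i j => g (r1 y + i) (c1 y + j).

Inductive tree : N -> nat -> nat -> (nat -> nat -> option (Sig + N)) -> Prop :=
| tree_fixed X g t : (X, t) \in tg_fixed G -> g 0 0 = Some (inl t) -> tree X 1 1 g
| tree_var X h w g om (s : 'M[N]_(h, w)) P :
    (X, om) \in tg_var G -> LOC om s -> strong_hpartition s P ->
    (forall y Y, P y -> label s y = Some Y -> tree Y (height y) (width y) (subf g y)) ->
    tree X h w g.

Lemma tree_ext X h w g g' : tree X h w g ->
  (forall i j, i < h -> j < w -> g i j = g' i j) -> tree X h w g'.
Proof.
move=> HT; elim: HT g' => {X h w g}.
  by move=> X g t Hf Hg g' E; apply: tree_fixed Hf _; rewrite -E.
move=> X h w g om s P Hv Hl Hs _ IH g' E.
apply: (tree_var Hv Hl Hs) => y Y Py Ly; apply: IH => // i j Hi Hj.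
by apply: E; have := proj1 (proj1 Hs) y Py; rect_lia.
Qed.

Lemma tree_inv X h w g : tree X h w g ->
  (exists t, [/\ h = 1, w = 1, (X, t) \in tg_fixed G & g 0 0 = Some (inl t)]) \/
  exists om (s : 'M[N]_(h, w)) P, [/\ (X, om) \in tg_var G, LOC om s, strong_hpartition s P &
    forall y Y, P y -> label s y = Some Y -> tree Y (height y) (width y) (subf g y)].
Proof. by case=> [X' g' t Ht Hg | X' h' w' g' om s P *]; [left; exists t | right; exists om, s, P]. Qed.

Definition trees_for m n (pi : rect -> Prop) (p : 'M[Sig + N]_(m, n))
    (g : nat -> nat -> option (Sig + N)) :=
  forall x X, pi x -> homog p x (inr X) -> tree X (height x) (width x) (subf g x).

Lemma trees_for_step m n (p p1 p2 : 'M[Sig + N]_(m, n)) pi pi1 pi2 :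
  step G p pi p1 pi1 -> derives G p1 pi1 p2 pi2 -> part m n pi ->
  trees_for pi1 p1 (pget p2) -> trees_for pi p (pget p2).
Proof.
move=> Hs Hd Hp IH x X Px Hx; have Hp1 := step_part Hs Hp.
have [d [A [Pd Hdh Eo Ep Hrule]]] := step_inv Hs.
case: (classic (x = d)) => [Exd|Nxd]; last first.
  apply: IH; first exact: Ep.
  move=> i j I; rewrite -(Hx _ _ I) Eo //; apply/negP => Id; apply: Nxd.
  exact: (part_disj Hp Px Pd I Id).
subst x; have /and4P [h1 h2 h3 h4] := proj1 Hp d Pd.
have EXA := homog_eq h1 h2 Hx Hdh; subst A.
case: Hrule => [[t [Er Ec Ht Hp1d Pd1]]|[om [s [P [Hv Hl Hs' Hch Hin]]]]].
  have -> : height d = 1 by rect_lia.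
  have -> : width d = 1 by rect_lia.
  apply: (tree_fixed Ht); rewrite /subf !addn0 (derives_frozen Hd Hp1 Pd1) ?Hp1d //.
    by move=> [Y HY]; move: (HY (r1 d) (c1 d)); rewrite Hp1d => H; have := H (corner_in h1 h2).
  exact: corner_in.
apply: (tree_var Hv Hl Hs') => y Y Py Ly.
have Vy := proj1 (proj1 Hs') y Py.
have Hy : homog p1 (shift d y) (inr Y).
  move=> i j; rewrite in_rect_shift => /and3P [a b c].
  rewrite Hin; last by rect_lia.
  by rewrite (proj2 (proj2 (proj1 Hs')) y Py _ _ c) Ly.
have := IH _ _ (Hch y Py) Hy; rewrite /= !subnDl => HT.
by apply: (tree_ext HT) => i j _ _; rewrite /subf /= !addnA.
Qed.

Lemma derives_trees m n (p p2 : 'M[Sig + N]_(m, n)) pi pi2 :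
  derives G p pi p2 pi2 -> part m n pi ->
  (forall i j, i < m -> j < n -> exists a, pget p2 i j = Some (inl a)) ->
  trees_for pi p (pget p2).
Proof.
elim=> {p pi p2 pi2}.
  move=> p pi Hp Hf x X Px Hx; have /and4P [h1 h2 h3 h4] := proj1 Hp x Px.
  have [a Ha] := Hf (r1 x) (c1 x) (leq_ltn_trans h1 h3) (leq_ltn_trans h2 h4).
  by move: (Hx _ _ (corner_in h1 h2)); rewrite Ha.
move=> p pi p1 pi1 p2 pi2 Hs Hd IH Hp Hf.
exact: (trees_for_step Hs Hd Hp (IH (step_part Hs Hp) Hf)).
Qed.

End Trees.

Definition all_rects (B : nat) : list rect :=
  let rng := List.seq 0 B in
  List.flat_map (fun a => List.flat_map (fun b => List.flat_map (fun c =>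
    List.map (fun d => Rect a b c d) rng) rng) rng) rng.

Lemma all_rectsP B y : r1 y < B -> c1 y < B -> r2 y < B -> c2 y < B -> List.In y (all_rects B).
Proof.
case: y => a b c d /= *; rewrite /all_rects.
apply/List.in_flat_map; exists a; split; first by apply/List.in_seq; lia.
apply/List.in_flat_map; exists b; split; first by apply/List.in_seq; lia.
apply/List.in_flat_map; exists c; split; first by apply/List.in_seq; lia.
by apply/List.in_map_iff; exists d; split => //; apply/List.in_seq; lia.
Qed.

Lemma blocks_list h w (P : rect -> Prop) : (forall y, P y -> valid_in h w y) ->
  exists l, forall y, P y <-> List.In y l.
Proof.
move=> HV; pose dec y := if excluded_middle_informative (P y) then true else false.
exists (List.filter dec (all_rects (h + w))) => y; rewrite List.filter_In /dec.
case: excluded_middle_informative => Py; last by split => // -[].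
by split => // _; split => //; have := HV y Py; move=> *; apply: all_rectsP; rect_lia.
Qed.

Section Complete.
Variables (Sig N : finType) (G : TG Sig N).

Definition realizable X h w (g : nat -> nat -> option (Sig + N)) :=
  forall m n (p : 'M[Sig + N]_(m, n)) pi x,
  part m n pi -> pi x -> h = height x -> w = width x -> homog p x (inr X) ->
  exists p' pi', [/\ derives G p pi p' pi',
    forall i j, in_rect x i j -> pget p' i j = g (i - r1 x) (j - c1 x),
    forall i j, ~~ in_rect x i j -> pget p' i j = pget p i j &
    forall z, pi' z <-> pixelize pi (eq^~ x) z].

Lemma realizable_ext X h w g g' : (forall i j, g i j = g' i j) ->
  realizable X h w g -> realizable X h w g'.
Proof.
move=> E R m n p pi x Hp Px Eh Ew Hx.
have [p' [pi' [Hd Ein Eout Epi]]] := R m n p pi x Hp Px Eh Ew Hx.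
by exists p', pi'; split => // i j I; rewrite -E; apply: Ein.
Qed.

Lemma realize_fixed X g t : (X, t) \in tg_fixed G -> g 0 0 = Some (inl t) ->
  realizable X 1 1 g.
Proof.
move=> Ht Hg m n p pi x Hp Px Eh Ew Hx; have Vx := proj1 Hp x Px.
have Ex : x = Rect (r1 x) (c1 x) (r1 x) (c1 x) by case: x Eh Ew Vx {Px Hx} => *; f_equal; rect_lia.
pose p' : 'M[Sig + N]_(m, n) := (\matrix_(i, j) if in_rect x i j then inl t else p i j)%R.
exists p', pi; split.
- apply: derives_step (derives_refl _ _ _).
  by apply: (@step_fixed _ _ G m n p pi p' pi x X t) => //; [rect_lia|rect_lia|move=> i j; rewrite mxE].
- move=> i j I; have /andP [Hi Hj] := in_rect_valid Vx I.
  rewrite (pgetE _ Hi Hj) mxE /= I.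
  by have [-> ->] : i - r1 x = 0 /\ j - c1 x = 0 by rect_lia.
- by move=> i j NI; apply: pget_congr => i' j' Ei Ej; subst i j; rewrite mxE (negbTE NI).
move=> z; split => [Pz|]; rewrite /pixelize.
  case: (classic (z = x)) => [->|Nz]; last by left.
  by right; exists x, (r1 x), (c1 x); split => //; rect_lia.
case=> [[]//|[q [i [j [-> I ->]]]]]; suff -> : Rect i j i j = x by [].
by rewrite [RHS]Ex; f_equal; rect_lia.
Qed.

Lemma realize_blocks m n (p : 'M[Sig + N]_(m, n)) pi (gt : nat -> nat -> option (Sig + N)) l :
  part m n pi ->
  (forall q, List.In q l -> pi q /\
     exists X, homog p q (inr X) /\ realizable X (height q) (width q) (subf gt q)) ->
  exists p' pi', [/\ derives G p pi p' pi',
    forall q i j, List.In q l -> in_rect q i j -> pget p' i j = gt i j,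
    forall i j, (forall q, List.In q l -> ~~ in_rect q i j) -> pget p' i j = pget p i j &
    forall z, pi' z <-> pixelize pi (fun q => List.In q l) z].
Proof.
elim: l => [|q l IH] Hp Hl.
  exists p, pi; split => [||//|z]; [exact: derives_refl | by [] |].
  by rewrite /pixelize; split => [Pz|[[]//|[q [i [j [[] _ _]]]]]]; left; split => // -[].
have [p1 [pi1 [Hd1 Ein1 Eout1 Epi1]]] := IH Hp (fun q' I => Hl q' (or_intror I)).
have Hp1 := derives_part Hd1 Hp.
case: (classic (List.In q l)) => Iql.
  exists p1, pi1; split => //.
  - by move=> q' i j [<-|I] I'; [apply: (Ein1 q) | apply: (Ein1 q')].
  - by move=> i j H; apply: Eout1 => q' I; apply: H; right.
  - by move=> z; rewrite Epi1; apply: pixelize_ext => q'; split => [I|[<-|I]] //; right.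
have [Pq [X [Hq Rq]]] := Hl q (or_introl erefl).
have Nq : forall q', List.In q' l -> forall i j, in_rect q i j -> ~~ in_rect q' i j.
  move=> q' I i j Iq; apply/negP => Iq'; apply: Iql.
  by rewrite -(part_disj Hp (proj1 (Hl q' (or_intror I))) Pq Iq' Iq).
have Pq1 : pi1 q by apply/Epi1; left.
have Hq1 : homog p1 q (inr X) by move=> i j I; rewrite Eout1 ?Hq // => q' I'; apply: Nq.
have [p2 [pi2 [Hd2 Ein2 Eout2 Epi2]]] := Rq _ _ p1 pi1 q Hp1 Pq1 erefl erefl Hq1.
exists p2, pi2; split.
- exact: derives_trans Hd1 Hd2.
- move=> q' i j [<-|I] I'; first by rewrite Ein2 // /subf; f_equal; rect_lia.
  rewrite Eout2 ?(Ein1 q') //; apply/negP => Iq.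
  by move: (Nq q' I i j Iq); rewrite I'.
- move=> i j H; rewrite Eout2 ?Eout1 //; last exact: (H q (or_introl erefl)).
  by move=> q' I; apply: H; right.
move=> z; rewrite Epi2 (pixelize_add _ Hp _ Pq Iql Epi1); last first.
  by move=> q' I; apply: (proj1 (Hl q' (or_intror I))).
by apply: pixelize_ext => q'; split => [[|<-]|[->|]]; [right|left|right|left].
Qed.

Lemma var_step m n (p : 'M[Sig + N]_(m, n)) pi x X om (s : 'M[N]_(height x, width x)) P :
  part m n pi -> pi x -> homog p x (inr X) -> (X, om) \in tg_var G -> LOC om s ->
  strong_hpartition s P ->
  exists p1, [/\ step G p pi p1 (fun z => (pi z /\ z <> x) \/ exists y, P y /\ z = shift x y),
    forall i j, in_rect x i j -> pget p1 i j = omap inr (pget s (i - r1 x) (j - c1 x)) &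
    forall i j, ~~ in_rect x i j -> pget p1 i j = pget p i j].
Proof.
move=> Hp Px Hx Hv Hl Hs; have Vx := proj1 Hp x Px.
pose p1 : 'M[Sig + N]_(m, n) := (\matrix_(i, j) if in_rect x i j then
    (if pget s (i - r1 x) (j - c1 x) is Some a then inr a else p i j) else p i j)%R.
have Ep1 : forall i j, in_rect x i j -> pget p1 i j = omap inr (pget s (i - r1 x) (j - c1 x)).
  move=> i j I; have /andP [Hi Hj] := in_rect_valid Vx I.
  have Li : i - r1 x < height x by rect_lia.
  have Lj : j - c1 x < width x by rect_lia.
  by rewrite (pgetE _ Hi Hj) (pgetE _ Li Lj) mxE /= I (pgetE _ Li Lj).
exists p1; split => //; last first.
  by move=> i j NI; apply: pget_congr => i' j' Ei Ej; subst i j; rewrite mxE (negbTE NI).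
apply: (step_var (A := X) (om := om) (s := s) (P := P)) => // i j.
by case: ifP => I; [rewrite -(Ep1 _ _ I) pget_ord | rewrite mxE I].
Qed.

Lemma realize_var X h w g om (s : 'M[N]_(h, w)) P :
  (X, om) \in tg_var G -> LOC om s -> strong_hpartition s P ->
  (forall y Y, P y -> label s y = Some Y -> realizable Y (height y) (width y) (subf g y)) ->
  realizable X h w g.
Proof.
move=> Hv Hl Hs Hc m n p pi x Hp Px Eh Ew Hx; subst h w.
have HP := hpartition_part (proj1 Hs); have /and4P [h1 h2 _ _] := proj1 Hp x Px.
have [p1 [Hstep Ein1 Eout1]] := var_step Hp Px Hx Hv Hl Hs.
have [l Hlst] := blocks_list (proj1 HP).
pose gt i j := g (i - r1 x) (j - c1 x).
have Hchildren : forall q, List.In q (List.map (shift x) l) ->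
    ((pi q /\ q <> x) \/ exists y, P y /\ q = shift x y) /\
    exists Y, homog p1 q (inr Y) /\ realizable Y (height q) (width q) (subf gt q).
  move=> q /List.in_map_iff [y [<- /Hlst Py]]; split; first by right; exists y.
  have Vy := proj1 HP y Py; have [Y LY] := label_some s Vy.
  exists Y; split.
    move=> i j I; rewrite Ein1; last exact: shift_sub Vy h1 h2 I.
    move: I; rewrite in_rect_shift => /and3P [_ _ I].
    by rewrite (proj2 (proj2 (proj1 Hs)) y Py _ _ I) LY.
  rewrite /= !subnDl; apply: realizable_ext (Hc y Y Py LY) => i j.
  by rewrite /subf /gt /=; f_equal; lia.
have [p' [pi' [Hd Ein Eout Epi]]] := realize_blocks (step_part Hstep Hp) Hchildren.
exists p', pi'; split.
- exact: derives_step Hstep Hd.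
- move=> i j I; have [y [Py Iy]] := shift_cover HP I.
  by apply: (Ein (shift x y)) => //; apply/List.in_map_iff; exists y; split => //; apply/Hlst.
- move=> i j NI; rewrite Eout ?Eout1 // => q /List.in_map_iff [y [<- /Hlst Py]].
  by apply/negP => I; move/negP: NI; apply; apply: shift_sub (proj1 HP y Py) h1 h2 I.
move=> z; rewrite Epi -(pixelize_children z Hp Px HP); apply: pixelize_ext => q.
split; first by move=> /List.in_map_iff [y [<- /Hlst Py]]; exists y.
by move=> [y [/Hlst Py ->]]; apply/List.in_map_iff; exists y.
Qed.

Lemma tree_realizable X h w g : tree G X h w g -> realizable X h w g.
Proof.
elim=> {X h w g}; first exact: realize_fixed.
by move=> X h w g om s P Hv Hl Hs _ IH; apply: (realize_var Hv Hl Hs).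
Qed.

End Complete.

Lemma homog_const (T : Type) m n (v : T) x : valid_in m n x -> homog (const_mx v : 'M_(m, n)) x v.
Proof. by move=> Vx i j I; have /andP [Hi Hj] := in_rect_valid Vx I; rewrite (pgetE _ Hi Hj) mxE. Qed.

Section Language.
Variables (Sig N : finType) (G : TG Sig N).

Definition term_pic m n (p : 'M[Sig]_(m, n)) : nat -> nat -> option (Sig + N) :=
  fun i j => omap inl (pget p i j).

Lemma TGlang_tree m n (p : 'M[Sig]_(m, n)) :
  TGlang G p -> tree G (tg_start G) m n (term_pic p).
Proof.
move=> [Hm [Hn [pi0 [pif [E0 [Ef Hd]]]]]].
have Hp0 : part m n pi0 := part_eqv E0 (part_whole Hm Hn).
have Hterm : forall i j, i < m -> j < n -> exists a, pget (map_mx inl p : 'M[Sig + N]_(m, n)) i j = Some (inl a).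
  by move=> i j Hi Hj; rewrite pget_map (pgetE _ Hi Hj); eexists.
have Vw : valid_in m n (whole m n) by rect_lia.
have := derives_trees Hd Hp0 Hterm (proj2 (E0 _) erefl) (homog_const _ Vw).
rewrite /= !subn0 !prednK // => HT.
by apply: (tree_ext HT) => i j _ _; rewrite /subf !add0n pget_map.
Qed.

Lemma tree_TGlang m n (p : 'M[Sig]_(m, n)) : 0 < m -> 0 < n ->
  tree G (tg_start G) m n (term_pic p) -> TGlang G p.
Proof.
move=> Hm Hn HT; have Vw : valid_in m n (whole m n) by rect_lia.
have [||p2 [pi2 [Hd Ein _ Epi]]] := tree_realizable HT (part_whole Hm Hn) (erefl (whole m n)) _ _
  (homog_const (inr (tg_start G)) Vw); rewrite ?subn0 ?prednK //.
do 2 split => //; exists (eq^~ (whole m n)), pi2; do 2 split => //.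
- move=> z; rewrite Epi /pixelize; split.
    by case=> [[]//|[q [i [j [-> I ->]]]]]; exists i, j; split => //; rect_lia.
  by case=> [i [j [Hi Hj ->]]]; right; exists (whole m n), i, j; split => //; rect_lia.
- suff -> : map_mx inl p = p2 by [].
  apply/matrixP => i j; have I : in_rect (whole m n) i j by have := ltn_ord i; have := ltn_ord j; rect_lia.
  by move: (Ein _ _ I); rewrite /= !subn0 !pget_ord /term_pic pget_ord mxE => -[->].
Qed.

End Language.

(* Its nonterminals are the start symbol None and
   Some (c, a, b): a pixel of colour c in a row of parity a and a column of
   parity b. The only variable size rule rewrites None into a picture whose
   horizontal and vertical neighbours differ (thanks to the parity bits, so that
   the strong partition consists of single pixels) and all of whose 2x2 windows
   have an even number of pixels of colour true; each Some (c, _, _) rewrites to c. *)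
Definition PNT : finType := option (bool * bool * bool).
Definition z0 : 'I_2 := ord0.
Definition z1 : 'I_2 := ord_max.

Lemma I2_cases (k : 'I_2) : k = z0 \/ k = z1.
Proof. by case: k => [[|[|k]] Hk]; [left|right|]; try apply: val_inj. Qed.

Definition colour (o : option PNT) : bool := if o is Some (Some (c, _, _)) then c else false.

Definition parity_tile (t : 'M[option PNT]_2) : bool :=
  [&& [forall k : 'I_2 * 'I_2, t k.1 k.2 != Some None],
      (t z0 z0 == None) || (t z0 z0 != t z0 z1),
      (t z1 z0 == None) || (t z1 z0 != t z1 z1),
      (t z0 z0 == None) || (t z0 z0 != t z1 z0),
      (t z0 z1 == None) || (t z0 z1 != t z1 z1) &
      [forall k : 'I_2 * 'I_2, t k.1 k.2 != None] ==>
        (colour (t z0 z0) (+) colour (t z0 z1) (+) colour (t z1 z0) (+) colour (t z1 z1) == false)].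

Definition parity_tiles : {set 'M[option PNT]_2} := [set t | parity_tile t].

Definition parity_fixed : {set PNT * bool} :=
  [set x : PNT * bool | if x.1 is Some (c, _, _) then x.2 == c else false].

Definition parity_grammar : TG bool PNT := MkTG None parity_fixed [set (None, parity_tiles)].

(* No parity tile is concave: in a concave tile two neighbouring entries coincide. *)
Lemma parity_grammar_TG : is_TG parity_grammar.
Proof.
move=> A om; rewrite /= inE => /eqP [_ ->] t; rewrite inE.
case/andP => _ /and5P [H1 H2 H3 H4 _].
apply/negP => /existsP [b /existsP [[k1 k2] /andP [_ /forallP Hk]]].
have X : forall a c, (a, c) != (k1, k2) -> t a c = Some b.
  by move=> a c Nk; move: (Hk (a, c)); rewrite Nk => /eqP.
move: X; case: (I2_cases k1) => ->; case: (I2_cases k2) => -> X.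
- by move: H2; rewrite !X // => /orP [/eqP //|]; rewrite eqxx.
- by move: H3; rewrite !X // => /orP [/eqP //|]; rewrite eqxx.
- by move: H4; rewrite !X // => /orP [/eqP //|]; rewrite eqxx.
- by move: H1; rewrite !X // => /orP [/eqP //|]; rewrite eqxx.
Qed.

Lemma framedS (T : Type) h w (s : 'M[T]_(h, w)) k l : framed s k.+1 l.+1 = pget s k l.
Proof. by []. Qed.

Lemma tile_entry (T : Type) h w (s : 'M[T]_(h, w)) i j (a b : 'I_2) :
  tile_at s i j a b = framed s (i + a) (j + b).
Proof. by rewrite /tile_at mxE. Qed.

Definition colp m n (p : 'M[bool]_(m, n)) i j : bool := if pget p i j is Some c then c else false.
Definition window m n (p : 'M[bool]_(m, n)) i j : bool :=
  colp p i j (+) colp p i j.+1 (+) colp p i.+1 j (+) colp p i.+1 j.+1.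

Lemma parity_pixels m n (p : 'M[bool]_(m, n)) (s : 'M[PNT]_(m, n)) P :
  LOC parity_tiles s -> strong_hpartition s P ->
  (forall y Y, P y -> label s y = Some Y ->
     tree parity_grammar Y (height y) (width y) (subf (term_pic PNT p) y)) ->
  forall i j, i < m -> j < n -> exists a b, pget s i j = Some (Some (colp p i j, a, b)).
Proof.
move=> [Hm [Hn HL]] [[HV [HC HH]] _] Hc i j Hi Hj.
have [y [[Py Iy] _]] := HC i j Hi Hj.
have Hy := HH y Py _ _ Iy.
have := HL i j (ltnW Hi) (ltnW Hj); rewrite inE => /andP [/forallP Hk _].
move: (Hk (z1, z1)); rewrite /= tile_entry /= !addn1 framedS.
case Es: (pget s i j) => [[[[c a] b]|]|]; last by rewrite (pgetE _ Hi Hj) in Es.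
  move=> _; exists a, b; move: Hy; rewrite Es => Ly.
  case/tree_inv: (Hc y _ Py (esym Ly)) => [[t [E1 E2 Ht Hg]]|[om [s' [P' [Hv _ _ _]]]]].
    move: Ht; rewrite /= inE /= => /eqP Etc; subst t.
    have [Er Ec] : r1 y = i /\ c1 y = j by have := HV y Py; rect_lia.
    by move: Hg; rewrite /subf /term_pic !addn0 Er Ec /colp; case: (pget p i j) => [c'|] //= [->].
  by move: Hv; rewrite /= inE.
by rewrite eqxx.
Qed.

Lemma parity_windows m n (p : 'M[bool]_(m, n)) : TGlang parity_grammar p ->
  forall i j, i.+1 < m -> j.+1 < n -> window p i j = false.
Proof.
move=> HT i j Hi Hj.
case/tree_inv: (TGlang_tree HT) => [[t [_ _ Ht _]]|[om [s [P [Hv HL Hs Hc]]]]].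
  by move: Ht; rewrite /= inE.
move: Hv; rewrite /= inE => /eqP [Eom]; subst om.
have Pix := parity_pixels HL Hs Hc.
have [a1 [b1 E1]] := Pix i j (ltnW Hi) (ltnW Hj).
have [a2 [b2 E2]] := Pix i j.+1 (ltnW Hi) Hj.
have [a3 [b3 E3]] := Pix i.+1 j Hi (ltnW Hj).
have [a4 [b4 E4]] := Pix i.+1 j.+1 Hi Hj.
case: HL => _ [_ HL].
have := HL i.+1 j.+1 (ltnW Hi) (ltnW Hj); rewrite inE => /and5P [_ _ _ _ /andP [_ /implyP H]].
move: H; rewrite !tile_entry /= !addn0 !addn1 !framedS E1 E2 E3 E4 /= => H.
apply/eqP; apply: H; apply/forallP => -[k1 k2]; rewrite tile_entry /=.
by case: (I2_cases k1) => ->; case: (I2_cases k2) => -> /=;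
  rewrite ?addn0 ?addn1 framedS ?E1 ?E2 ?E3 ?E4.
Qed.

Definition xor_pic n (e : nat -> bool) : 'M[bool]_(n, n) := (\matrix_(i, j) (e i (+) e j))%R.
Definition xor_spic n (e : nat -> bool) : 'M[PNT]_(n, n) :=
  (\matrix_(i, j) Some (e i (+) e j, odd i, odd j))%R.

Definition xor_frame n (e : nat -> bool) k l : option PNT :=
  if (0 < k <= n) && (0 < l <= n) then Some (Some (e k.-1 (+) e l.-1, odd k.-1, odd l.-1)) else None.

Lemma framed_xor_spic n e k l : framed (xor_spic n e) k l = xor_frame n e k l.
Proof.
rewrite /xor_frame; case: k => [|k]; case: l => [|l] //=; first by rewrite andbF.
rewrite framedS; case Hij: ((k < n) && (l < n)); last by rewrite pget_out ?Hij.
by move/andP: Hij => [Hi Hj]; rewrite (pgetE _ Hi Hj) mxE.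
Qed.

Lemma xor_frame_h n e k l : xor_frame n e k l != None -> xor_frame n e k l != xor_frame n e k l.+1.
Proof.
rewrite /xor_frame; case: ifP => // /andP [_ /andP [H0 _]] _; case: ifP => // _.
by apply/negP => /eqP [] _; case: l H0 => [|l] //= _; case: (odd l).
Qed.

Lemma xor_frame_v n e k l : xor_frame n e k l != None -> xor_frame n e k l != xor_frame n e k.+1 l.
Proof.
rewrite /xor_frame; case: ifP => // /andP [/andP [H0 _] _] _; case: ifP => // _.
by apply/negP => /eqP [] _; case: k H0 => [|k] //= _; case: (odd k).
Qed.

Lemma xor_spic_LOC n e : 0 < n -> LOC parity_tiles (xor_spic n e).
Proof.
move=> Hn; do 2 split => //.
move=> i j _ _; rewrite inE /parity_tile !tile_entry /= !addn0 !addn1 !framed_xor_spic.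
apply/andP; split.
  by apply/forallP => -[k1 k2] /=; rewrite tile_entry framed_xor_spic /xor_frame; case: ifP.
apply/and5P; split.
- by case: eqP => //= /eqP; apply: xor_frame_h.
- by case: eqP => //= /eqP; apply: xor_frame_h.
- by case: eqP => //= /eqP; apply: xor_frame_v.
- by case: eqP => //= /eqP; apply: xor_frame_v.
apply/implyP => /forallP H.
move: (H (z0, z0)) (H (z1, z1)); rewrite !tile_entry /= !addn0 !addn1 !framed_xor_spic /xor_frame.
case: ifP => // /andP [/andP [H1 _] /andP [H2 _]] _.
case: ifP => // /andP [/andP [_ H3] /andP [_ H4]] _.
clear H; rewrite !ifT; try lia.
case: i H1 H3 => [|i] // _ _; case: j H2 H4 => [|j] // _ _ /=.
by case: (e i); case: (e i.+1); case: (e j); case: (e j.+1).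
Qed.

Definition unit_part n (y : rect) : Prop := exists i j, [/\ i < n, j < n & y = Rect i j i j].

(* Since neighbours of xor_spic differ, its strong partition consists of pixels. *)
Lemma xor_spic_strong n e : strong_hpartition (xor_spic n e) (unit_part n).
Proof.
split; first split.
- by move=> y [i [j [Hi Hj ->]]]; rect_lia.
- split.
    move=> i j Hi Hj; exists (Rect i j i j); split; first by split; [exists i, j | rect_lia].
    by move=> y [[i' [j' [_ _ ->]]] I]; f_equal; rect_lia.
  move=> y [i' [j' [Hi' Hj' ->]]] i j I.
  by have [-> ->] : i = i' /\ j = j' by rect_lia.
move=> y y' [a [b [Ha Hb ->]]] [c [d [Hc Hd ->]]] Ne; rewrite /adjacent /label /=.
rewrite (pgetE _ Ha Hb) (pgetE _ Hc Hd) !mxE /=.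
case/orP => [/orP [/orP [|]|]|] /andP [/eqP E _] [_ Hrow Hcol].
- by rewrite -E /= in Hrow; case: (odd a) Hrow.
- by rewrite -E /= in Hrow; case: (odd c) Hrow.
- by rewrite -E /= in Hcol; case: (odd b) Hcol.
- by rewrite -E /= in Hcol; case: (odd d) Hcol.
Qed.

Lemma xor_pic_in n e : 0 < n -> TGlang parity_grammar (xor_pic n e).
Proof.
move=> Hn; apply: tree_TGlang => //.
apply: (tree_var _ (xor_spic_LOC e Hn) (xor_spic_strong n e)); first by rewrite /= inE.
move=> y Y [i [j [Hi Hj ->]]]; rewrite /label /= (pgetE _ Hi Hj) mxE => -[<-].
rewrite !subnn; apply: (tree_fixed (t := e i (+) e j)); first by rewrite /= inE /=.
by rewrite /subf /term_pic !addn0 (pgetE _ Hi Hj) mxE.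
Qed.

Lemma interval_const (f : nat -> bool) lo hi :
  (forall t, lo <= t < hi -> f t = f t.+1) -> forall t, lo <= t <= hi -> f t = f lo.
Proof.
move=> H; elim=> [|t IH] /andP [Hlo Hhi]; first by have -> : lo = 0 by lia.
case: (leqP lo t) => Ht; last by have -> : lo = t.+1 by lia.
by rewrite -H ?IH //; lia.
Qed.

Section StrongPartition.
Variables (T : Type) (h w : nat) (s : 'M[T]_(h, w)) (P : rect -> Prop).
Hypothesis Hs : strong_hpartition s P.

(* Of two neighbouring pixels carrying the label of the block z of the strong
   partition, either both or none lie in z: otherwise the block containing the
   other pixel would be adjacent to z with the same label. *)
Lemma neighbour_in z i j i' j' : P z -> in_rect z i j -> i' < h -> j' < w ->
  (i' = i /\ (j' = j.+1 \/ j = j'.+1)) \/ (j' = j /\ (i' = i.+1 \/ i = i'.+1)) ->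
  pget s i' j' = label s z -> in_rect z i' j'.
Proof.
move=> Pz Iz Hi Hj Hn Hl; have [[HV [HC HH]] Hst] := Hs.
have [z' [[Pz' Iz'] U]] := HC i' j' Hi Hj.
case: (classic (z' = z)) => [<-//|Nz]; exfalso.
apply: (Hst z z' Pz Pz' (nesym Nz)); last by rewrite -(HH z' Pz' _ _ Iz') Hl.
have N1 : ~~ in_rect z i' j' by apply/negP => I; apply: Nz; apply: U.
have N2 : ~~ in_rect z' i j.
  by apply/negP => I; apply: Nz; apply: (part_disj (hpartition_part (proj1 Hs)) Pz' Pz I Iz).
have := HV z Pz; have := HV z' Pz'; move: Iz Iz' N1 N2; rewrite /adjacent.
case: Hn => [[-> [->|->]]|[-> [->|->]]] *; apply/orP.
- by left; apply/orP; right; rect_lia.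
- by right; rect_lia.
- by left; apply/orP; left; apply/orP; left; rect_lia.
- by left; apply/orP; left; apply/orP; right; rect_lia.
Qed.

Lemma absorb z R a b : P z -> valid_in h w R ->
  (forall i j, in_rect R i j -> pget s i j = label s z) ->
  in_rect R a b -> in_rect z a b -> forall i j, in_rect R i j -> in_rect z i j.
Proof.
move=> Pz VR HR IRa Iza i j IR.
have row : forall t, c1 R <= t <= c2 R -> in_rect z a t = in_rect z a (c1 R).
  apply: interval_const => t Ht.
  apply/idP/idP => I; apply: (neighbour_in Pz I); try (apply: HR); rect_lia.
have col : forall t, r1 R <= t <= r2 R -> in_rect z t j = in_rect z (r1 R) j.
  apply: interval_const => t Ht.
  apply/idP/idP => I; apply: (neighbour_in Pz I); try (apply: HR); rect_lia.
have Iaj : in_rect z a j by rewrite row -?(row b) //; rect_lia.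
by rewrite col -?(col a) //; rect_lia.
Qed.

End StrongPartition.

Lemma strong_unique (T : Type) h w (s : 'M[T]_(h, w)) P P' z :
  strong_hpartition s P -> strong_hpartition s P' -> P z -> P' z.
Proof.
move=> Hs Hs' Pz.
have [[HV [HC HH]] _] := Hs; have [[HV' [HC' HH']] _] := Hs'.
have Vz := HV z Pz; move/and4P: (Vz) => [a1 a2 a3 a4].
have Iz := corner_in a1 a2.
have [z' [[Pz' Iz'] _]] := HC' (r1 z) (c1 z) (leq_ltn_trans a1 a3) (leq_ltn_trans a2 a4).
have Lz : label s z' = label s z by rewrite -(HH' z' Pz' _ _ Iz').
have S1 : forall i j, in_rect z' i j -> in_rect z i j.
  by apply: (absorb Hs Pz (HV' z' Pz')) Iz' Iz => i j I; rewrite (HH' z' Pz' _ _ I) Lz.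
have S2 : forall i j, in_rect z i j -> in_rect z' i j.
  by apply: (absorb Hs' Pz' Vz) Iz Iz' => i j I; rewrite (HH z Pz _ _ I) Lz.
have /and4P [b1 b2 _ _] := HV' z' Pz'.
suff <- : z' = z by [].
by apply: rect_eq => // i j; apply/idP/idP; [apply: S1 | apply: S2].
Qed.

Definition box n := ('I_n * 'I_n * 'I_n * 'I_n)%type.
Definition boxP n (N : finType) (s : 'M[N]_(n, n)) (X : N) (b : box n) : bool :=
  [forall i : 'I_n, forall j : 'I_n,
    (s i j == X) == ((b.1.1.1 <= i <= b.1.2) && (b.1.1.2 <= j <= b.2))].
Definition box_table n (N : finType) (s : 'M[N]_(n, n)) : {ffun N -> option (box n)} :=
  [ffun X => [pick b | boxP s X b]].

(* In a picture with a regional partition every label occupies exactly one box,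
   so the picture is determined by its box table. *)
Lemma box_table_inj n (N : finType) (s s' : 'M[N]_(n, n)) Q :
  regional_hpartition s Q -> box_table s = box_table s' -> s = s'.
Proof.
move=> [[HV [HC HH]] Hreg] Ek; apply/matrixP => i j.
have [q [[Pq Iq] _]] := HC i j (ltn_ord i) (ltn_ord j).
move/and4P: (HV q Pq) => [a1 a2 a3 a4].
pose b : box n := (Ordinal (leq_ltn_trans a1 a3), Ordinal (leq_ltn_trans a2 a4), Ordinal a3, Ordinal a4).
have Lq : label s q = Some (s i j) by rewrite -(HH q Pq _ _ Iq) pget_ord.
have Hb : boxP s (s i j) b.
  apply/forallP => i'; apply/forallP => j'; apply/eqP; apply/idP/idP.
    move/eqP => E; have [q' [[Pq' Iq'] _]] := HC i' j' (ltn_ord i') (ltn_ord j').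
    case: (classic (q' = q)) => [Eq|Nq]; first by subst q'; move: Iq'; rewrite /in_rect.
    exfalso; apply: (Hreg q' q Pq' Pq Nq).
    by rewrite -(HH q' Pq' _ _ Iq') pget_ord E Lq.
  move=> H; have I' : in_rect q i' j' by move: H; rewrite /in_rect.
  by move: (HH q Pq _ _ I'); rewrite Lq pget_ord => -[->].
have : box_table s (s i j) = box_table s' (s i j) by rewrite Ek.
rewrite !ffunE.
case: pickP => [b0 Hb0|/(_ b)]; last by rewrite Hb.
case: pickP => [b1 Hb1 [Eb]|//]; subst b1.
move/forallP/(_ i)/forallP/(_ j): Hb0; rewrite eqxx => /eqP Hin.
by move/forallP/(_ i)/forallP/(_ j): Hb1; rewrite -Hin => /eqP/eqP.
Qed.

Section FirstSplit.
Variables (Sig N : finType) (G : TG Sig N).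

Lemma first_split X h w g : tree G X h w g -> ~ (h = 1 /\ w = 1) ->
  exists Y om (s : 'M[N]_(h, w)) P, [/\ forall g', tree G Y h w g' -> tree G X h w g',
    (Y, om) \in tg_var G, LOC om s, strong_hpartition s P &
    (exists y, P y /\ y <> whole h w) /\
    forall y Yl, P y -> label s y = Some Yl -> tree G Yl (height y) (width y) (subf g y)].
Proof.
elim=> {X h w g}; first by move=> X g t _ _ [].
move=> X h w g om s P Hv HL Hs Hc IH Hne.
case: (classic (exists y, P y /\ y <> whole h w)) => Hex; first by exists X, om, s, P.
have [Hh [Hw _]] := HL.
have Hall : forall y, P y -> y = whole h w.
  by move=> y Py; apply: NNPP => Ny; apply: Hex; exists y.
have [y [[Py _] _]] := proj1 (proj2 (proj1 Hs)) 0 0 Hh Hw.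
have Ey := Hall y Py; subst y.
have [Y' LY'] : exists Y', label s (whole h w) = Some Y' by apply: label_some; rect_lia.
have Eh : height (whole h w) = h by rewrite /= subn0 prednK.
have Ew : width (whole h w) = w by rewrite /= subn0 prednK.
move: (IH _ _ Py LY'); rewrite Eh Ew => /(_ Hne) [Y [om' [s' [P' [Hchain Hv' HL' Hs' [Hex' Hc']]]]]].
(* [subf g (whole h w)] is convertible to [g]. *)
exists Y, om', s', P'; split => // g' HT; apply: (tree_var Hv HL Hs) => y Yl Py' Ly.
have Ey := Hall y Py'; subst y; move: Ly; rewrite LY' => -[<-].
by rewrite Eh Ew; apply: Hchain.
Qed.

End FirstSplit.

Lemma linear_below_exp c d : exists t, c * t + d < 2 ^ t.
Proof.
exists ((2 * c + d + 1) * 2); rewrite expnM -mulnn.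
have := ltn_expl (2 * c + d + 1) (isT : 1 < 2).
move: (2 ^ (2 * c + d + 1)) => X HX.
by apply: leq_trans _ (leq_mul HX HX); nia.
Qed.

Lemma growth A B : exists k, 0 < k /\ A * ((k.+1) ^ 4 + 1) ^ B < 2 ^ k.
Proof.
have [t Ht] := linear_below_exp (4 * B) (A + 5 * B).
exists (2 ^ t); split; first by rewrite expn_gt0.
have H1 : (2 ^ t).+1 ^ 4 + 1 <= 2 ^ (4 * t + 5).
  rewrite expnD (mulnC 4 t) expnM; have : 0 < 2 ^ t by rewrite expn_gt0.
  by move: (2 ^ t) => X; rewrite (_ : 2 ^ 5 = 32) //; nia.
have H2 : ((2 ^ t).+1 ^ 4 + 1) ^ B <= 2 ^ ((4 * t + 5) * B).
  by rewrite expnM; case: B {Ht} => [|B] //; rewrite leq_exp2r.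
apply: leq_ltn_trans (leq_mul (leqnn A) H2) _.
apply: leq_trans (_ : 2 ^ A * 2 ^ ((4 * t + 5) * B) <= _).
  by rewrite ltn_pmul2r ?expn_gt0 // ltn_expl.
by rewrite -expnD leq_exp2l //; lia.
Qed.

Lemma pigeonhole (A B : finType) (F : A -> B) : #|B| < #|A| ->
  exists x y, x <> y /\ F x = F y.
Proof.
move=> Hc; apply: NNPP => H; move: Hc; rewrite ltnNge (@leq_card _ _ F) //.
by move=> x y Exy; apply: NNPP => Nxy; apply: H; exists x, y.
Qed.

Lemma change_point (f : nat -> bool) m : f 0 = false -> f m = true ->
  exists i, i < m /\ f i != f i.+1.
Proof.
move=> f0; elim: m => [|m IH] fm; first by rewrite f0 in fm.
case fm': (f m); last by exists m; rewrite fm fm'.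
by have [i [Hi Ni]] := IH fm'; exists i; split => //; apply: ltnW.
Qed.

Definition hybrid_colour (Z : rect) (e1 e2 : nat -> bool) a b : bool :=
  if in_rect Z a b then e1 a (+) e1 b else e2 a (+) e2 b.
Definition hybrid n Z e1 e2 : 'M[bool]_(n, n) := (\matrix_(a, b) hybrid_colour Z e1 e2 a b)%R.

Lemma colp_hybrid n Z e1 e2 a b : a < n -> b < n -> colp (hybrid n Z e1 e2) a b = hybrid_colour Z e1 e2 a b.
Proof. by move=> Ha Hb; rewrite /colp (pgetE _ Ha Hb) mxE. Qed.

Lemma window_hybrid n Z e1 e2 a b : a.+1 < n -> b.+1 < n ->
  window (hybrid n Z e1 e2) a b = hybrid_colour Z e1 e2 a b (+) hybrid_colour Z e1 e2 a b.+1 (+)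
                                 hybrid_colour Z e1 e2 a.+1 b (+) hybrid_colour Z e1 e2 a.+1 b.+1.
Proof. by move=> Ha Hb; rewrite /window !colp_hybrid // ltnW. Qed.

Lemma window_hborder n Z e1 e2 a b : a.+1 < n -> b.+1 < n ->
  in_rect Z a b = in_rect Z a b.+1 -> in_rect Z a.+1 b = in_rect Z a.+1 b.+1 ->
  in_rect Z a b != in_rect Z a.+1 b ->
  window (hybrid n Z e1 e2) a b = (e1 b (+) e2 b) (+) (e1 b.+1 (+) e2 b.+1).
Proof.
move=> Ha Hb E1 E2 N; rewrite window_hybrid // /hybrid_colour -E1 -E2.
case: (in_rect Z a b) (in_rect Z a.+1 b) N => [] [] // _;
  by case: (e1 a); case: (e2 a); case: (e1 a.+1); case: (e2 a.+1);
     case: (e1 b); case: (e2 b); case: (e1 b.+1); case: (e2 b.+1).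
Qed.

Lemma window_vborder n Z e1 e2 a b : a.+1 < n -> b.+1 < n ->
  in_rect Z a b = in_rect Z a.+1 b -> in_rect Z a b.+1 = in_rect Z a.+1 b.+1 ->
  in_rect Z a b != in_rect Z a b.+1 ->
  window (hybrid n Z e1 e2) a b = (e1 a (+) e2 a) (+) (e1 a.+1 (+) e2 a.+1).
Proof.
move=> Ha Hb E1 E2 N; rewrite window_hybrid // /hybrid_colour -E1 -E2.
case: (in_rect Z a b) (in_rect Z a b.+1) N => [] [] // _;
  by case: (e1 a); case: (e2 a); case: (e1 a.+1); case: (e2 a.+1);
     case: (e1 b); case: (e2 b); case: (e1 b.+1); case: (e2 b.+1).
Qed.

Lemma window_diag n Z e1 e2 i : i.+1 < n -> in_rect Z i i.+1 -> ~~ in_rect Z i.+1 i ->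
  window (hybrid n Z e1 e2) i i = (e1 i (+) e2 i) (+) (e1 i.+1 (+) e2 i.+1).
Proof.
move=> Hi I1 I2; rewrite window_hybrid // /hybrid_colour I1 (negbTE I2) !addbb !if_same.
by case: (e1 i); case: (e2 i); case: (e1 i.+1); case: (e2 i.+1).
Qed.

Lemma not_whole_side n Z : valid_in n n Z -> Z <> whole n n ->
  0 < r1 Z \/ 0 < c1 Z \/ (r2 Z).+1 < n \/ (c2 Z).+1 < n.
Proof.
move=> VZ NZ; apply: NNPP => H; apply: NZ; case: Z VZ H => a b c d /= V H.
rewrite /whole; f_equal; apply: NNPP => N; apply: H; rect_lia.
Qed.

(* If Z is not the whole square, contains (i, i+1), and e1 (+) e2 changes
   between i and i+1, then the hybrid picture has an odd window: either across
   the diagonal, or (Z then containing the square [i, i+1]^2) across a side of Z. *)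
Lemma hybrid_odd_window n Z e1 e2 i : valid_in n n Z -> Z <> whole n n -> i.+1 < n ->
  in_rect Z i i.+1 -> e1 i (+) e2 i != e1 i.+1 (+) e2 i.+1 ->
  exists a b, [/\ a.+1 < n, b.+1 < n & window (hybrid n Z e1 e2) a b].
Proof.
move=> VZ NZ Hi IZ; rewrite negb_eqb => He.
case: (boolP (in_rect Z i.+1 i)) => IB; last by exists i, i; split => //; rewrite window_diag.
have [H|[H|[H|H]]] := not_whole_side VZ NZ.
- by exists (r1 Z).-1, i; split; try rect_lia; rewrite window_hborder //; rect_lia.
- by exists i, (c1 Z).-1; split; try rect_lia; rewrite window_vborder //; rect_lia.
- by exists (r2 Z), i; split; try rect_lia; rewrite window_hborder //; rect_lia.
- by exists i, (c2 Z); split; try rect_lia; rewrite window_vborder //; rect_lia.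
Qed.

Section Regional.
Variables (Sig N : finType) (G : TG Sig N).

Lemma graft Y h w (s : 'M[N]_(h, w)) om P Z g1 g2 g :
  (Y, om) \in tg_var G -> LOC om s -> strong_hpartition s P -> P Z ->
  (forall Yl, label s Z = Some Yl -> tree G Yl (height Z) (width Z) (subf g1 Z)) ->
  (forall y Yl, P y -> label s y = Some Yl -> tree G Yl (height y) (width y) (subf g2 y)) ->
  (forall i j, i < h -> j < w -> g i j = if in_rect Z i j then g1 i j else g2 i j) ->
  tree G Y h w g.
Proof.
move=> Hv Hl Hs PZ H1 H2 Eg; apply: (tree_var Hv Hl Hs) => y Yl Py Ly.
have Vy := proj1 (proj1 Hs) y Py.
case: (classic (y = Z)) => [Ey|Ny].
  subst y; apply: (tree_ext (H1 Yl Ly)) => a b Ha Hb.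
  by rewrite /subf Eg ?ifT //; rect_lia.
apply: (tree_ext (H2 y Yl Py Ly)) => a b Ha Hb; rewrite /subf Eg ?ifF //; try rect_lia.
apply/negP => I; apply: Ny; apply: (part_disj (hpartition_part (proj1 Hs)) Py PZ _ I).
rect_lia.
Qed.

Definition record n : Type := (N * {set 'M[option N]_2} * {ffun N -> option (box n)})%type.

Definition split_record n (g : nat -> nat -> option (Sig + N)) (r : record n) : Prop :=
  exists Y om (s : 'M[N]_(n, n)) P, r = (Y, om, box_table s) /\
  [/\ forall g', tree G Y n n g' -> tree G (tg_start G) n n g',
      (Y, om) \in tg_var G, LOC om s, strong_hpartition s P &
      (exists y, P y /\ y <> whole n n) /\
      forall y Yl, P y -> label s y = Some Yl -> tree G Yl (height y) (width y) (subf g y)].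

Lemma split_record_exists n g : 1 < n -> tree G (tg_start G) n n g -> exists r : record n, split_record g r.
Proof.
move=> Hn HT; have [|Y [om [s [P [H1 H2 H3 H4 H5]]]]] := first_split HT; first by case=> E; rewrite E in Hn.
by exists (Y, om, box_table s), Y, om, s, P.
Qed.

Lemma same_record n g1 g2 (r : record n) : is_RTG G -> split_record g1 r -> split_record g2 r ->
  exists Y om (s : 'M[N]_(n, n)) P, [/\ forall g', tree G Y n n g' -> tree G (tg_start G) n n g',
    (Y, om) \in tg_var G, LOC om s, strong_hpartition s P &
    (exists y, P y /\ y <> whole n n) /\ forall y Yl, P y -> label s y = Some Yl ->
      tree G Yl (height y) (width y) (subf g1 y) /\ tree G Yl (height y) (width y) (subf g2 y)].
Proof.
move=> [_ Hreg] [Y1 [om1 [s1 [P1 [-> [_ Hv1 HL1 Hs1 [_ Hc1]]]]]]].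
move=> [Y [om [s [P [[EY Eom Eb] [Ch Hv HL Hs [Hex Hc]]]]]]]; subst Y1 om1.
have [Q HQ] := Hreg _ _ Hv1 _ _ s1 HL1.
have Es : s1 = s := box_table_inj HQ Eb; subst s1.
exists Y, om, s, P; split => //; split => // y Yl Py Ly; split; last exact: Hc.
exact: Hc1 _ _ (strong_unique Hs Hs1 Py) Ly.
Qed.

End Regional.

Definition seq_of k (f : {ffun 'I_k -> bool}) : nat -> bool :=
  fun i => if i is i'.+1 then (if insub i' is Some o then f o else false) else false.

Lemma record_card (N : finType) k :
  #|N| * #|{set 'M[option N]_2}| * ((k.+1) ^ 4 + 1) ^ #|N| < 2 ^ k ->
  #|{: record N k.+1}| < #|{ffun 'I_k -> bool}|.
Proof.
rewrite card_ffun card_bool card_ord !card_prod card_ffun card_option !card_prod card_ord.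
by rewrite (_ : k.+1 * k.+1 * k.+1 * k.+1 = k.+1 ^ 4) ?addn1 // !expnS expn0 muln1 !mulnA.
Qed.

Lemma parity_not_regional (N : finType) (G : TG bool N) : is_RTG G -> ~ same_lang G parity_grammar.
Proof.
move=> HR Hsame.
have [k [Hk Hgr]] := growth (#|N| * #|{set 'M[option N]_2}|) #|N|.
pose n := k.+1; pose g (f : {ffun 'I_k -> bool}) := term_pic N (xor_pic n (seq_of f)).
have Hrec : forall f, exists r : record N n, split_record G (g f) r.
  move=> f; apply: split_record_exists; first by rewrite ltnS.
  by apply: TGlang_tree; apply/Hsame; apply: xor_pic_in.
pose F f := proj1_sig (constructive_indefinite_description _ (Hrec f)).
have FP f : split_record G (g f) (F f) := proj2_sig (constructive_indefinite_description _ (Hrec f)).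
have [f1 [f2 [Nf Ef]]] := pigeonhole F (record_card Hgr).
have := FP f2; rewrite -Ef => H2.
have [Y [om [s [P [Ch Hv HL Hs [[y0 [Py0 Ny0]] Hc]]]]]] := same_record HR (FP f1) H2.
pose e1 := seq_of f1; pose e2 := seq_of f2.
have [o No] : exists o, f1 o != f2 o.
  apply: NNPP => H; apply: Nf; apply/ffunP => x; apply/eqP; apply: NNPP => Hx.
  by apply: H; exists x; apply/negP.
have [i [Hio He]] : exists i, i < o.+1 /\ e1 i (+) e2 i != e1 i.+1 (+) e2 i.+1.
  apply: (change_point (f := fun a => e1 a (+) e2 a)) => //.
  by rewrite /e1 /e2 /seq_of valK; move: No; case: (f1 o); case: (f2 o).
have Hi1 : i.+1 < n by rewrite /n ltnS; apply: leq_trans Hio (ltn_ord o).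
have HP := hpartition_part (proj1 Hs).
have [Z [[PZ IZ] _]] := proj2 HP i i.+1 (ltnW Hi1) Hi1.
have VZ := proj1 HP Z PZ.
have NZ : Z <> whole n n.
  move=> EZ; apply: Ny0; have Vy := proj1 HP y0 Py0.
  rewrite -EZ; apply: (part_disj HP Py0 PZ (i := r1 y0) (j := c1 y0)); first by rect_lia.
  by rewrite EZ; rect_lia.
have Hhyb : TGlang G (hybrid n Z e1 e2).
  apply: tree_TGlang => //; apply: Ch.
  apply: (graft (g1 := g f1) (g2 := g f2) Hv HL Hs PZ) => [Yl Ly|y Yl Py Ly|a b Ha Hb].
  - exact: proj1 (Hc Z Yl PZ Ly).
  - exact: proj2 (Hc y Yl Py Ly).
  by rewrite /g /term_pic !(pgetE _ Ha Hb) !mxE /hybrid_colour; case: ifP.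
have [a [b [Ha Hb Hodd]]] := hybrid_odd_window VZ NZ Hi1 IZ He.
by rewrite (parity_windows (proj1 (Hsame _ _ _) Hhyb)) in Hodd.
Qed.

Theorem mainTheorem7 :
  (forall (Sig N : finType) (G : TG Sig N), is_RTG G ->
     exists (N' : finType) (G' : TG Sig N'), is_TG G' /\ same_lang G' G) /\
  (exists (Sig N : finType) (G : TG Sig N), is_TG G /\
     forall (N' : finType) (G' : TG Sig N'), is_RTG G' -> ~ same_lang G' G).
Proof.
split.
  by move=> Sig N G [HTG _]; exists N, G; split => // m n p.
exists bool, PNT, parity_grammar; split; first exact: parity_grammar_TG.
exact: parity_not_regional.
Qed.
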